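(* Let $\mathcal A=\{a_1,\dots,a_n\}\subset\mathbb Z^d$ with $n\ge d+2$ and $d$-dimensional convex hull, and let $\Delta_1,\Delta_2$ be two $d$-simplices of $\mathcal A$ which share a facet. Then there exists a regular subdivision of $\mathcal A$ containing $\Delta_1$ and $\Delta_2$, so the cone $\mathcal C_{\Delta_1,\Delta_2}$ is nonempty. Moreover, there exists a regular triangulation of $\mathcal A$ containing both simplices.
   Context: A $d$-simplex of $\mathcal A$ is a subset of $d+1$ affinely independent points. Two $d$-simplices share a facet if the intersection of their convex hulls is a facet (codimension-one face) of both. Regular subdivisions: for $h\in\mathbb R^n$, lift $a_j$ to $(a_j,h_j)\in\mathbb R^{d+1}$; lower faces of the convex hull of the lifted points are those with an inner normal of positive last coordinate; each lower face $F$ gives the cell $\{a_j:(a_j,h_j)\in F\}$; the collection of cells is the regular subdivision induced by $h$. It contains a simplex if that simplex is one of its cells. $\mathcal C_{\Delta_1,\Delta_2}$ is the set of $h\in\mathbb R^n$ inducing a regular subdivision containing $\Delta_1$ and $\Delta_2$. A regular triangulation is a regular subdivision each of whose cells consists of affinely independent points which are exactly the vertices of its convex hull. *)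

From mathcomp Require Import all_boot all_order all_algebra.
From mathcomp Require Import reals.
Set Implicit Arguments. Unset Strict Implicit. Unset Printing Implicit Defensive.
Import Order.TTheory GRing.Theory Num.Theory.
Local Open Scope ring_scope.

Section Defs.
Variable R : realType.
Variable d n : nat.

Definition dotv (u v : 'rV[R]_d) : R := \sum_(i < d) u ord0 i * v ord0 i.

Definition ptsR (aZ : 'I_n -> 'rV[int]_d) (j : 'I_n) : 'rV[R]_d :=
  map_mx (fun z : int => z%:~R) (aZ j).

Definition affindep_fam m (p : 'I_m -> 'rV[R]_d) : Prop :=
  forall l : 'I_m -> R, \sum_i l i = 0 -> \sum_i l i *: p i = 0 ->
    forall i, l i = 0.

Definition affindep_set (a : 'I_n -> 'rV[R]_d) (S : {set 'I_n}) : Prop :=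
  forall l : 'I_n -> R, (forall j, j \notin S -> l j = 0) ->
    \sum_j l j = 0 -> \sum_j l j *: a j = 0 -> forall j, l j = 0.

Definition conv (a : 'I_n -> 'rV[R]_d) (S : {set 'I_n}) : 'rV[R]_d -> Prop :=
  fun x => exists l : 'I_n -> R, (forall j, 0 <= l j) /\
    (forall j, j \notin S -> l j = 0) /\ \sum_j l j = 1 /\
    x = \sum_j l j *: a j.

Definition has_dim (F : 'rV[R]_d -> Prop) (k : nat) : Prop :=
  (exists p : 'I_k.+1 -> 'rV[R]_d, (forall i, F (p i)) /\ affindep_fam p) /\
  ~ (exists p : 'I_k.+2 -> 'rV[R]_d, (forall i, F (p i)) /\ affindep_fam p).

Definition is_face (P F : 'rV[R]_d -> Prop) : Prop :=
  exists (c : 'rV[R]_d) (b : R), (forall y, P y -> b <= dotv c y) /\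
    (forall y, F y <-> (P y /\ dotv c y = b)).

Definition is_facet (P F : 'rV[R]_d -> Prop) : Prop :=
  is_face P F /\ exists k, k.+1 = d /\ has_dim F k.

Definition is_vertex (P : 'rV[R]_d -> Prop) (x : 'rV[R]_d) : Prop :=
  exists (c : 'rV[R]_d) (b : R), (forall y, P y -> b <= dotv c y) /\
    (forall y, (P y /\ dotv c y = b) <-> y = x).

Definition is_simplex (a : 'I_n -> 'rV[R]_d) (S : {set 'I_n}) : Prop :=
  #|S| = d.+1 /\ affindep_set a S.

Definition share_facet (a : 'I_n -> 'rV[R]_d) (S1 S2 : {set 'I_n}) : Prop :=
  let F := fun x => conv a S1 x /\ conv a S2 x in
  is_facet (conv a S1) F /\ is_facet (conv a S2) F.

(* C is a cell of the regular subdivision induced by h: C = set of j whose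
   lifted point (a_j, h_j) lies on a lower face of conv{(a_j,h_j)}, i.e. a face
   with inner normal (c, c0), c0 > 0. *)
Definition lower_cell (a : 'I_n -> 'rV[R]_d) (h : 'I_n -> R)
    (C : {set 'I_n}) : Prop :=
  exists (c : 'rV[R]_d) (c0 b : R), 0 < c0 /\
    (forall j, b <= dotv c (a j) + c0 * h j) /\
    (forall j, (j \in C) = (dotv c (a j) + c0 * h j == b)).

Definition in_cone (a : 'I_n -> 'rV[R]_d) (S1 S2 : {set 'I_n})
    (h : 'I_n -> R) : Prop :=
  lower_cell a h S1 /\ lower_cell a h S2.

Definition regular_triangulation (a : 'I_n -> 'rV[R]_d) (h : 'I_n -> R) : Prop :=
  forall C, lower_cell a h C ->
    affindep_set a C /\
    (forall x, is_vertex (conv a C) x <-> exists2 j, j \in C & x = a j).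

End Defs.

From mathcomp Require Import all_boot all_order all_algebra.
From mathcomp Require Import reals boolp.
From mathcomp.algebra_tactics Require Import lra.
Set Implicit Arguments. Unset Strict Implicit. Unset Printing Implicit Defensive.
Import Order.TTheory GRing.Theory Num.Theory.
Local Open Scope ring_scope.

(* The common facet spans a hyperplane [dotv c x = b].  The remaining vertex
   of one simplex lies strictly on one side of it and that of the other
   strictly on the other side: otherwise a point of the second simplex close
   enough to the facet would lie in the first one without lying on the facet.
   Lift the points of both simplices to the heights [max (dotv c x - b) 0], a
   convex function affine on each simplex, and all other points high above
   both pieces: the two simplices become lower cells.  Taking the other
   heights to be [M + t ^+ j.+1] for a generic [t], no affine dependency of
   the points survives the lifting, so every lower cell is a simplex. *)

Section AffineAlgebra.
Variables (R : realType) (d : nat).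
Implicit Types (c x : 'rV[R]_d) (b : R).

Lemma dotv_sum (I : finType) c (l : I -> R) (x : I -> 'rV[R]_d) :
  dotv c (\sum_i l i *: x i) = \sum_i l i * dotv c (x i).
Proof.
rewrite /dotv; under eq_bigr => k _ do rewrite summxE mulr_sumr.
rewrite exchange_big; apply: eq_bigr => i _; rewrite mulr_sumr.
by apply: eq_bigr => k _; rewrite mxE mulrCA.
Qed.

Lemma dotv_combB (I : finType) c b (l : I -> R) (x : I -> 'rV[R]_d) :
  dotv c (\sum_i l i *: x i) - (\sum_i l i) * b = \sum_i l i * (dotv c (x i) - b).
Proof.
by rewrite dotv_sum mulr_suml -sumrB; apply: eq_bigr => i _; rewrite mulrBr.
Qed.

Lemma dotv0l x : dotv 0 x = 0.
Proof. by rewrite /dotv big1 // => k _; rewrite mxE mul0r. Qed.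

Lemma dotv0r c : dotv c 0 = 0.
Proof. by rewrite /dotv big1 // => k _; rewrite mxE mulr0. Qed.

Lemma dotvNl c x : dotv (- c) x = - dotv c x.
Proof. by rewrite /dotv -sumrN; apply: eq_bigr => k _; rewrite mxE mulNr. Qed.

(* Homogeneous coordinates: affine (in)dependence of points is linear
   (in)dependence of the lifted vectors [x, 1]. *)
Definition liftv x : 'rV[R]_(d + 1) := row_mx x (const_mx 1).

Definition lift_mx m (p : 'I_m -> 'rV[R]_d) : 'M[R]_(m, d + 1) :=
  \matrix_i liftv (p i).

Lemma mul_lift_mx m (p : 'I_m -> 'rV[R]_d) (v : 'rV[R]_m) :
  v *m lift_mx p = row_mx (\sum_i v 0 i *: p i) (const_mx (\sum_i v 0 i)).
Proof.
rewrite mulmx_sum_row; apply/rowP => k; rewrite summxE.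
case: (split_ordP k) => k' ->.
- rewrite row_mxEl summxE; apply: eq_bigr => i _.
  by rewrite rowK /liftv mxE row_mxEl mxE.
- rewrite row_mxEr mxE; apply: eq_bigr => i _.
  by rewrite rowK /liftv mxE row_mxEr mxE mulr1.
Qed.

Lemma affindep_fam_row_free m (p : 'I_m -> 'rV[R]_d) :
  affindep_fam p -> row_free (lift_mx p).
Proof.
move=> indep; apply: inj_row_free => v; rewrite mul_lift_mx -row_mx0.
move/eq_row_mx => [comb0 /rowP/(_ 0)]; rewrite !mxE => sum0.
by apply/rowP => i; rewrite mxE (indep _ sum0 comb0).
Qed.

Lemma affine_hull_not_affindep_fam m t (p : 'I_m -> 'rV[R]_d)
    (q : 'I_t -> 'rV[R]_d) (L : 'I_m -> 'I_t -> R) :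
  (forall i, \sum_k L i k = 1) -> (forall i, p i = \sum_k L i k *: q k) ->
  (t < m)%N -> ~ affindep_fam p.
Proof.
move=> L1 pE ltm /affindep_fam_row_free.
have -> : lift_mx p = \matrix_(i, k) L i k *m lift_mx q.
  apply/row_matrixP => i; rewrite row_mul rowK mul_lift_mx /liftv pE -(L1 i).
  by congr row_mx; [|congr const_mx]; apply: eq_bigr => k _; rewrite !mxE.
move/eqP; set L' := \matrix_(i, k) L i k => rk.
have := leq_trans (mxrankM_maxl L' (lift_mx q)) (rank_leq_col L').
by rewrite rk leqNgt ltm.
Qed.

Lemma affindep_fam_coords (p : 'I_(d + 1) -> 'rV[R]_d) x :
  affindep_fam p -> exists mu : 'I_(d + 1) -> R,
    \sum_i mu i = 1 /\ x = \sum_i mu i *: p i.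
Proof.
move/affindep_fam_row_free; rewrite row_free_unit => unit_p.
have := mulmxKV unit_p (liftv x); rewrite mul_lift_mx => /eq_row_mx [xE sum1].
exists (fun i => (liftv x *m invmx (lift_mx p)) 0 i); split; last exact: esym xE.
by move/rowP/(_ 0): sum1; rewrite !mxE.
Qed.

Lemma affindep_fam_interp m (p : 'I_m -> 'rV[R]_d) (w : 'I_m -> R) :
  affindep_fam p -> exists c b, forall i, dotv c (p i) + b = w i.
Proof.
move/affindep_fam_row_free/row_freeP => [B BK].
pose X := B *m \col_i w i.
have XE : lift_mx p *m X = \col_i w i by rewrite mulmxA BK mul1mx.
exists (\row_k X (lshift 1 k) 0), (X (rshift d 0) 0) => i.
move/colP/(_ i): XE; rewrite [LHS]mxE [RHS]mxE => <-.
rewrite big_split_ord big_ord1 /dotv [lift_mx p i _]mxE /liftv row_mxEr.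
rewrite [const_mx 1 _ _]mxE mul1r.
congr (_ + _); apply: eq_bigr => k _.
by rewrite [lift_mx p i _]mxE row_mxEl mxE mulrC.
Qed.

End AffineAlgebra.

Section PushWeights.
Variables (R : realType) (I J : finType) (e : I -> J).

Definition push_weights (mu : I -> R) (j : J) : R := \sum_(i | e i == j) mu i.

Lemma push_weightsZ (V : lmodType R) (mu : I -> R) (x : J -> V) :
  \sum_j push_weights mu j *: x j = \sum_i mu i *: x (e i).
Proof.
under eq_bigr => j _ do rewrite scaler_suml.
rewrite (exchange_big_dep xpredT) //=; apply: eq_bigr => i _.
by rewrite (big_pred1 (e i)) // => j; rewrite /= eq_sym.
Qed.

Lemma push_weights_sum (mu : I -> R) : \sum_j push_weights mu j = \sum_i mu i.
Proof. by rewrite [RHS](partition_big e xpredT). Qed.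

Lemma push_weights_inj (mu : I -> R) i : injective e -> push_weights mu (e i) = mu i.
Proof.
move=> inj_e; rewrite /push_weights (big_pred1 i) // => k /=.
exact: inj_eq.
Qed.

Lemma push_weights_out (mu : I -> R) j : (forall i, e i != j) -> push_weights mu j = 0.
Proof. by move=> ne; rewrite /push_weights big_pred0 // => i; apply/negbTE. Qed.

End PushWeights.

Lemma enum_set_ord (n m : nat) (S : {set 'I_n}) : #|S| = m ->
  exists e : 'I_m -> 'I_n,
    [/\ injective e, forall i, e i \in S & forall j, j \in S -> exists i, e i = j].
Proof.
move=> cardS; exists (fun i => enum_val (cast_ord (esym cardS) i)); split.
- by move=> i1 i2 /enum_val_inj /cast_ord_inj.
- by move=> i; apply: enum_valP.
- move=> j Sj; exists (cast_ord cardS (enum_rank_in Sj j)).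
  by rewrite cast_ordK enum_rankK_in.
Qed.

Section PointSets.
Variables (R : realType) (d n : nat) (a : 'I_n -> 'rV[R]_d).

Lemma affindep_set_fam m (S : {set 'I_n}) (e : 'I_m -> 'I_n) :
  injective e -> (forall i, e i \in S) -> affindep_set a S ->
  affindep_fam (fun i => a (e i)).
Proof.
move=> inj_e eS indepS l sum0 comb0 i.
rewrite -(push_weights_inj l i inj_e); apply: indepS.
- move=> j Sj; apply: push_weights_out => k; apply: contraNneq Sj => <-; exact: eS.
- by rewrite push_weights_sum.
- by rewrite push_weightsZ.
Qed.

Lemma conv_not_affindep_fam m (T : {set 'I_n}) (p : 'I_m -> 'rV[R]_d) :
  (forall i, conv a T (p i)) -> (#|T| < m)%N -> ~ affindep_fam p.
Proof.
move=> Tp ltm; have [e [inj_e eT Te]] := enum_set_ord (erefl #|T|).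
have [L LP] := choice Tp.
have pullE (l : 'I_n -> R) : (forall j, j \notin T -> l j = 0) ->
    push_weights e (fun k => l (e k)) =1 l.
  move=> l0 j; have [/Te [k <-]|Tj] := boolP (j \in T); first exact: push_weights_inj.
  by rewrite l0 // push_weights_out // => k; apply: contraNneq Tj => <-.
apply: (affine_hull_not_affindep_fam (q := fun k => a (e k))
  (L := fun i k => L i (e k))) ltm => i; have [_ [L0 [L1 pE]]] := LP i.
- by rewrite -(push_weights_sum e) -L1; apply: eq_bigr => j _; rewrite pullE.
- by rewrite -(push_weightsZ e) pE; apply: eq_bigr => j _; rewrite pullE.
Qed.

Lemma affindep_set_coords (S : {set 'I_n}) x :
  #|S| = d.+1 -> affindep_set a S -> exists mu : 'I_n -> R,
    [/\ forall j, j \notin S -> mu j = 0, \sum_j mu j = 1 & x = \sum_j mu j *: a j].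
Proof.
rewrite -addn1 => /enum_set_ord [e [inj_e eS _]] /(affindep_set_fam inj_e eS).
move=> /(affindep_fam_coords x) [mu [mu1 xE]].
exists (push_weights e mu); split; rewrite ?push_weights_sum ?push_weightsZ //.
by move=> j Sj; apply: push_weights_out => k; apply: contraNneq Sj => <-.
Qed.

Lemma affindep_set_interp (S : {set 'I_n}) (w : 'I_n -> R) :
  affindep_set a S -> exists c b, forall j, j \in S -> dotv c (a j) + b = w j.
Proof.
have [e [inj_e eS Se]] := enum_set_ord (erefl #|S|).
move=> /(affindep_set_fam inj_e eS) /(affindep_fam_interp (fun k => w (e k))).
by move=> [c [b cbE]]; exists c, b => j /Se [k <-].
Qed.

End PointSets.

Section ConvexHulls.
Variables (R : realType) (d n : nat) (a : 'I_n -> 'rV[R]_d).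
Implicit Types (S T : {set 'I_n}) (c y : 'rV[R]_d) (b : R).

Lemma conv_mem S j : j \in S -> conv a S (a j).
Proof.
move=> Sj; exists (fun i => (i == j)%:R); split; first by move=> i; rewrite ler0n.
split; first by move=> i Si; have /negbTE -> : i != j by apply: contraNneq Si => ->.
split; first by rewrite (bigD1 j) //= eqxx big1 ?addr0 // => i /negbTE ->.
by rewrite (bigD1 j) //= eqxx scale1r big1 ?addr0 // => i /negbTE ->; rewrite scale0r.
Qed.

Lemma conv_subset {S T y} : T \subset S -> conv a T y -> conv a S y.
Proof.
move=> /subsetP TS [l [l0 [lT l1yE]]]; exists l; split=> //; split=> //.
by move=> j Sj; apply/lT/(contra (TS j)).
Qed.

Lemma conv_normalize S (w : 'I_n -> R) :
  (forall j, 0 <= w j) -> (forall j, j \notin S -> w j = 0) -> 0 < \sum_j w j ->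
  conv a S (\sum_j ((\sum_i w i)^-1 * w j) *: a j).
Proof.
move=> w0 wS sum_gt0; exists (fun j => (\sum_i w i)^-1 * w j); split.
  by move=> j; rewrite mulr_ge0 ?invr_ge0 ?w0 ?ltW.
split; first by move=> j /wS ->; rewrite mulr0.
by rewrite -mulr_sumr mulVf ?gt_eqF.
Qed.

Lemma comb_supp_on_hyperplane (l : 'I_n -> R) c b :
  (forall j, 0 <= l j) -> \sum_j l j = 1 -> (forall j, 0 < l j -> b <= dotv c (a j)) ->
  dotv c (\sum_j l j *: a j) = b -> forall j, 0 < l j -> dotv c (a j) = b.
Proof.
move=> l0 l1 ge_b on_H j lj_gt0.
have term_ge0 i : true -> 0 <= l i * (dotv c (a i) - b).
  move=> _; have [li_gt0|li_le0] := ltP 0 (l i).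
    by rewrite mulr_ge0 ?subr_ge0 ?ge_b ?ltW.
  by rewrite [l i](@le_anti _ _ _ 0) ?li_le0 ?l0 ?mul0r.
have := dotv_combB c b l a; rewrite l1 mul1r on_H subrr => /esym sum0.
have /eqP := psumr_eq0P term_ge0 sum0 (isT : true) (i := j).
by rewrite mulf_eq0 gt_eqF //= subr_eq0 => /eqP.
Qed.

Lemma face_conv S c b : (forall y, conv a S y -> b <= dotv c y) ->
  forall y, conv a S y /\ dotv c y = b <-> conv a [set j in S | dotv c (a j) == b] y.
Proof.
move=> ge_b y; split.
- move=> [[l [l0 [lS [l1 yE]]]] on_H].
  have S_of j : 0 < l j -> j \in S by apply: contraTT => /lS ->; rewrite ltxx.
  have := comb_supp_on_hyperplane l0 l1 (fun j lj => ge_b _ (conv_mem (S_of j lj))).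
  rewrite -yE => /(_ on_H) H_of.
  exists l; split=> //; split=> //.
  move=> j; rewrite inE negb_and => /orP[/lS //|cj_neq].
  apply/eqP; rewrite eq_le l0 andbT leNgt; apply: contra cj_neq => lj_gt0.
  by rewrite H_of.
- move=> yF; split.
    by apply: conv_subset yF; apply/subsetP => j; rewrite inE => /andP[].
  case: yF => l [_ [lF [l1 ->]]]; apply/eqP; rewrite -subr_eq0 -[b]mul1r -{1}l1.
  rewrite dotv_combB big1 // => j _.
  case: (boolP (j \in [set j in S | dotv c (a j) == b])) => [|/lF ->].
    by rewrite inE => /andP[_ /eqP ->]; rewrite subrr mulr0.
  by rewrite mul0r.
Qed.

Lemma vertex_conv_mem (P : 'rV[R]_d -> Prop) x T :
  is_vertex P x -> (forall s, s \in T -> P (a s)) -> conv a T x ->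
  exists2 s, s \in T & x = a s.
Proof.
move=> [c [b [P_ge P_x]]] TP [l [l0 [lT [l1 xE]]]].
have [Px cx] := (P_x x).2 erefl.
have T_of j : 0 < l j -> j \in T by apply: contraTT => /lT ->; rewrite ltxx.
have sum_neq0 : \sum_(j | xpredT j) l j <> 0 by rewrite l1; apply/eqP/oner_neq0.
have [s /andP[_ ls_gt0]] := psumr_neq0P (fun j _ => l0 j) sum_neq0.
have := comb_supp_on_hyperplane l0 l1 (fun j lj => P_ge _ (TP j (T_of j lj))).
rewrite -xE => /(_ cx s ls_gt0) cs.
by exists s; [exact: T_of | apply/esym/(P_x (a s)).1; split; [exact/TP/T_of|]].
Qed.

(* The interpolating affine function that vanishes at [a k] and equals 1 at
   the other points of [S] supports the vertex [a k]. *)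
Lemma is_vertex_affindep S k : affindep_set a S -> k \in S -> is_vertex (conv a S) (a k).
Proof.
move=> indepS Sk; have [c [b0 cE]] := affindep_set_interp (fun j => (j != k)%:R) indepS.
have ge0 j : j \in S -> - b0 <= dotv c (a j) by move/cE; rewrite -subr_ge0 opprK => ->.
have conv_ge y : conv a S y -> - b0 <= dotv c y.
  move=> [l [l0 [lS [l1 ->]]]]; rewrite -subr_ge0 -[- b0]mul1r -{1}l1 dotv_combB.
  apply: sumr_ge0 => j _; have [/ge0|/lS ->] := boolP (j \in S); last by rewrite mul0r.
  by rewrite -subr_ge0 => /(mulr_ge0 (l0 j)).
exists c, (- b0); split=> // y; split=> [[[l [l0 [lS [l1 yE]]]] on_H]|->].
- have S_of j : 0 < l j -> j \in S by apply: contraTT => /lS ->; rewrite ltxx.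
  have := comb_supp_on_hyperplane l0 l1 (fun j lj => ge0 j (S_of j lj)).
  rewrite -yE => /(_ on_H) H_of.
  have l_out j : j != k -> l j = 0.
    move=> jk; apply/eqP; rewrite eq_le l0 andbT leNgt; apply/negP => /[dup] lj /H_of.
    by move/eqP; rewrite -subr_eq0 opprK cE ?S_of // jk oner_eq0.
  rewrite yE (bigD1 k) //= big1 ?addr0 => [|j /l_out ->]; last by rewrite scale0r.
  by move: l1; rewrite (bigD1 k) //= big1 ?addr0 => [->|j /l_out]; rewrite ?scale1r.
- by split; [exact: conv_mem | apply/eqP; rewrite -subr_eq0 opprK cE // eqxx].
Qed.

Lemma is_vertex_conv_affindep S x : affindep_set a S ->
  is_vertex (conv a S) x <-> exists2 j, j \in S & x = a j.
Proof.
move=> indepS; split=> [vx|[j Sj ->]]; last exact: is_vertex_affindep.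
have [c [b [_ /(_ x) [_ /(_ erefl) [Sx _]]]]] := vx.
exact: vertex_conv_mem vx (fun s => @conv_mem S s) Sx.
Qed.

Lemma simplex_vertex_mem S T j : injective a -> affindep_set a S -> j \in S ->
  (forall s, s \in T -> conv a S (a s)) -> conv a T (a j) -> j \in T.
Proof.
move=> inj_a indepS Sj TS ajT.
by have [s Ts /inj_a ->] := vertex_conv_mem (is_vertex_affindep indepS Sj) TS ajT.
Qed.

End ConvexHulls.

Section OppositeSides.
Variables (R : realType) (d n : nat) (a : 'I_n -> 'rV[R]_d).
Variables (S1 S2 T : {set 'I_n}) (v1 v2 : 'I_n) (c c' : 'rV[R]_d) (b b' : R).
Hypotheses (indepS1 : affindep_set a S1) (cardS1 : #|S1| = d.+1).
Hypotheses (TS1 : T \subset S1) (TS2 : T \subset S2) (S2v2 : v2 \in S2).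
Hypothesis S1DT : forall j, j \in S1 -> j \notin T -> j = v1.
Hypotheses (cT : forall j, j \in T -> dotv c (a j) = b) (cv1 : b < dotv c (a v1)).
Hypotheses (c'T : forall j, j \in T -> dotv c' (a j) = b') (c'v2 : dotv c' (a v2) != b').
Hypothesis c'_shared : forall y, conv a S1 y -> conv a S2 y -> dotv c' y = b'.

(* If [a v2] were on the side of [a v1], then for large [K] the point
   [K * sum_(j in T) a j + a v2], normalized, would lie in both simplices
   but off the hyperplane [c'] of their common facet. *)
Lemma opposite_side : dotv c (a v2) < b.
Proof.
rewrite ltNge; apply/negP => b_le.
have [mu [muS mu1 v2E]] := affindep_set_coords (a v2) cardS1 indepS1.
have mu_v1 : 0 <= mu v1.
  have : dotv c (a v2) - 1 * b = mu v1 * (dotv c (a v1) - b).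
    rewrite -{1}mu1 v2E dotv_combB (bigD1 v1) //= big1 ?addr0 // => j jv1.
    have [S1j|/muS ->] := boolP (j \in S1); last by rewrite mul0r.
    have Tj : j \in T by apply: contraR jv1 => /(S1DT S1j) ->.
    by rewrite cT // subrr mulr0.
  rewrite mul1r => del_v2; move: b_le; rewrite -subr_ge0 del_v2 pmulr_lge0 //.
  by rewrite subr_gt0.
pose K := \sum_j `|mu j|.
have mu_K j : `|mu j| <= K by rewrite /K (bigD1 j) //= lerDl sumr_ge0.
pose w1 j := (j \in T)%:R * K + mu j.
pose w2 j := (j \in T)%:R * K + (j == v2)%:R.
have sum_w (u : 'I_n -> R) : \sum_j ((j \in T)%:R * K + u j) = #|T|%:R * K + \sum_j u j.
  rewrite big_split /= -mulr_suml; congr (_ * _ + _).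
  by rewrite -sum1_card natr_sum [RHS]big_mkcond; apply: eq_bigr => j _; case: (j \in T).
have K0 : 0 <= K by apply: sumr_ge0.
pose W := #|T|%:R * K + 1.
have W_gt0 : 0 < W by have := mulr_ge0 (ler0n R #|T|) K0; rewrite /W; lra.
have sum_w1 : \sum_j w1 j = W by rewrite sum_w mu1.
have sum_w2 : \sum_j w2 j = W.
  by rewrite sum_w (bigD1 v2) //= eqxx big1 ?addr0 // => j /negbTE ->.
have comb_w (u : 'I_n -> R) : \sum_j ((j \in T)%:R * K + u j) *: a j =
    K *: \sum_j (j \in T)%:R *: a j + \sum_j u j *: a j.
  rewrite scaler_sumr -big_split; apply: eq_bigr => j _.
  by rewrite scalerDl scalerA mulrC.
have comb_w12 : \sum_j (W^-1 * w1 j) *: a j = \sum_j (W^-1 * w2 j) *: a j.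
  under eq_bigr do rewrite -scalerA; under [RHS]eq_bigr do rewrite -scalerA.
  rewrite -!scaler_sumr !comb_w -v2E; congr (_ *: (_ + _)).
  by rewrite (bigD1 v2) //= eqxx scale1r big1 ?addr0 // => j /negbTE ->; rewrite scale0r.
pose q := \sum_j (W^-1 * w2 j) *: a j.
have q1 : conv a S1 q.
  rewrite /q -comb_w12 -sum_w1; apply: conv_normalize; last by rewrite sum_w1.
    move=> j; rewrite /w1; case: (boolP (j \in T)) => [_|Tj].
      by move: (mu_K j); rewrite ler_norml mul1r => /andP[? _]; lra.
    rewrite mul0r add0r; have [S1j|/muS -> //] := boolP (j \in S1).
    by rewrite (S1DT S1j Tj).
  move=> j S1j; rewrite /w1 muS // addr0.
  by rewrite (negbTE (contra (subsetP TS1 j) S1j)) mul0r.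
have q2 : conv a S2 q.
  rewrite /q -sum_w2; apply: conv_normalize; last by rewrite sum_w2.
    by move=> j; rewrite /w2 addr_ge0 ?mulr_ge0 ?ler0n.
  move=> j S2j; rewrite /w2 (negbTE (contra (subsetP TS2 j) S2j)) mul0r add0r.
  by have /negbTE -> : j != v2 by apply: contraNneq S2j => ->.
have v2T : v2 \notin T by apply: contra c'v2 => /c'T ->.
have := dotv_combB c' b' (fun j => W^-1 * w2 j) a.
rewrite -/q (c'_shared q1 q2) -mulr_sumr sum_w2 mulVf ?gt_eqF // mul1r subrr.
rewrite (bigD1 v2) //= big1 ?addr0 => [|j jv2].
  rewrite /w2 (negbTE v2T) eqxx mul0r add0r mulr1 => /esym/eqP.
  by rewrite mulf_eq0 invr_eq0 gt_eqF //= subr_eq0 (negbTE c'v2).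
have [/c'T ->|Tj] := boolP (j \in T); first by rewrite subrr mulr0.
by rewrite /w2 (negbTE Tj) (negbTE jv2) mul0r addr0 mulr0 mul0r.
Qed.
End OppositeSides.

Section SharedFacet.
Variables (R : realType) (d n : nat) (a : 'I_n -> 'rV[R]_d).

Lemma card_facet_simplex (S T : {set 'I_n}) k :
  is_simplex a S -> T \subset S -> k.+1 = d -> has_dim (conv a T) k -> #|T| = d.
Proof.
move=> [cardS indepS] TS dk [[p [Tp indep_p]] no_more]; apply/eqP; rewrite eqn_leq.
apply/andP; split; rewrite leqNgt; apply/negP => ltT.
  have TE : T = S by apply/eqP; rewrite eqEcard TS cardS.
  have cardSk : #|S| = k.+2 by rewrite cardS -dk.
  have [e [inj_e eS _]] := enum_set_ord cardSk.
  apply: no_more; exists (fun i => a (e i)); split; last exact: affindep_set_fam indepS.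
  by move=> i; rewrite TE; apply: conv_mem.
by apply: (conv_not_affindep_fam Tp) indep_p; rewrite dk.
Qed.

Lemma share_facet_common_vertices (S1 S2 : {set 'I_n}) :
  injective a -> is_simplex a S1 -> is_simplex a S2 -> share_facet a S1 S2 ->
  (forall y, conv a S1 y /\ conv a S2 y <-> conv a (S1 :&: S2) y) /\ #|S1 :&: S2| = d.
Proof.
move=> inj_a simplex1 [_ indep2].
move=> [[[c [b [ge_b FE1]]] [k [dk dimF]]] [[c' [b' [ge_b' FE2]]] _]].
have [_ indep1] := simplex1.
set T := [set j in S1 | dotv c (a j) == b].
set T2 := [set j in S2 | dotv c' (a j) == b'].
have FT y : conv a S1 y /\ conv a S2 y <-> conv a T y :=
  iff_trans (FE1 y) (face_conv ge_b y).
have FT2 y : conv a S1 y /\ conv a S2 y <-> conv a T2 y :=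
  iff_trans (FE2 y) (face_conv ge_b' y).
have TS1 : T \subset S1 by apply/subsetP => j; rewrite inE => /andP[].
have TS2 : T \subset S2.
  apply/subsetP => t Tt; have S1t := subsetP TS1 t Tt.
  have T2_S1 s : s \in T2 -> conv a S1 (a s) by move/(conv_mem a)/FT2 => [].
  have /(simplex_vertex_mem inj_a indep1 S1t T2_S1) : conv a T2 (a t).
    by apply/FT2/FT; apply: conv_mem.
  by rewrite inE => /andP[].
have -> : S1 :&: S2 = T.
  apply/setP => j; rewrite inE; apply/andP/idP => [[S1j S2j]|Tj].
    rewrite inE S1j; apply/eqP.
    by have [] := (FE1 (a j)).1 (conj (conv_mem a S1j) (conv_mem a S2j)).
  by rewrite (subsetP TS1) ?(subsetP TS2).
split=> //; apply: card_facet_simplex simplex1 TS1 dk _.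
suff <- : (fun y => conv a S1 y /\ conv a S2 y) = conv a T by [].
by apply/funext => y; apply/propext/FT.
Qed.

Lemma share_facet_separation (S1 S2 : {set 'I_n}) :
  injective a -> is_simplex a S1 -> is_simplex a S2 -> share_facet a S1 S2 ->
  exists c b v2, [/\ S2 :\: S1 = [set v2], forall j, j \in S1 -> b <= dotv c (a j),
    forall j, j \in S1 -> (dotv c (a j) == b) = (j \in S2) & dotv c (a v2) < b].
Proof.
move=> inj_a simplex1 simplex2 shared.
have [FI cardI] := share_facet_common_vertices inj_a simplex1 simplex2 shared.
move: simplex1 simplex2 shared => [cardS1 indep1] [cardS2 indep2].
move=> [[[c [b [ge_b FE1]]] _] [[c' [b' [ge_b' FE2]]] _]].
set T := S1 :&: S2; have TS1 : T \subset S1 := subsetIl S1 S2.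
have TS2 : T \subset S2 := subsetIr S1 S2.
have [cT c'T] :
    {in T, forall j, dotv c (a j) = b} /\ {in T, forall j, dotv c' (a j) = b'}.
  split=> j /(conv_mem a)/FI F_aj.
    by have [] := (FE1 _).1 F_aj.
  by have [] := (FE2 _).1 F_aj.
have [v1 S1DT] : exists v1, S1 :\: T = [set v1].
  by apply/cards1P; rewrite cardsD (setIidPr TS1) cardS1 cardI subSnn.
have [v2 S2DT] : exists v2, S2 :\: T = [set v2].
  by apply/cards1P; rewrite cardsD (setIidPr TS2) cardS2 cardI subSnn.
have [S1v1 v1T] : v1 \in S1 /\ v1 \notin T by apply/setDP; rewrite S1DT set11.
have [S2v2 v2T] : v2 \in S2 /\ v2 \notin T by apply/setDP; rewrite S2DT set11.
have eq_b j : j \in S1 -> (dotv c (a j) == b) = (j \in S2).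
  move=> S1j; apply/eqP/idP => [cj|S2j]; last by apply: cT; rewrite inE S1j.
  have /(simplex_vertex_mem inj_a indep1 S1j) : conv a T (a j).
    by apply/FI/FE1; split=> //; apply: conv_mem.
  by move/(_ (fun s Ts => conv_mem a (subsetP TS1 s Ts))); rewrite inE => /andP[].
exists c, b, v2; split=> //.
- by rewrite -S2DT setDIr setDv setU0.
- by move=> j S1j; apply/ge_b/conv_mem.
- apply: (@opposite_side _ _ _ a S1 S2 T v1 v2 c c' b b' indep1 cardS1 TS1 TS2 S2v2
    _ cT _ c'T).
  + by move=> j S1j Tj; apply/set1P; rewrite -S1DT; apply/setDP.
  + have := ge_b _ (conv_mem a S1v1); rewrite le_eqVlt eq_sym eq_b // => /orP[S2v1|//].
    by move: v1T; rewrite inE S1v1 S2v1.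
  + apply: contraNneq v2T => c'v2.
    apply: (simplex_vertex_mem inj_a indep2 S2v2) => [s /(subsetP TS2)|].
      exact: conv_mem.
    by apply/FI/FE2; split=> //; apply: conv_mem.
  + by move=> y S1y S2y; have [] := (FE2 y).1 (conj S1y S2y).
Qed.

End SharedFacet.

Lemma exists_pos_nonroot (R : numDomainType) (I : finType) (P : I -> {poly R}) :
  exists2 t : R, 0 < t & forall i, P i != 0 -> ~~ root (P i) t.
Proof.
pose Q := \prod_(i | P i != 0) P i.
have Q_neq0 : Q != 0 by apply/prodf_neq0.
pose rs := [seq i.+1%:R : R | i <- iota 0 (size Q)].
have /allPn [_ /mapP [i _ ->] Qi] : ~~ all (root Q) rs.
  have uniq_rs : uniq rs.
    by rewrite map_inj_uniq ?iota_uniq // => i j /eqP; rewrite eqr_nat => /eqP [].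
  apply/negP => /(max_poly_roots Q_neq0)/(_ uniq_rs).
  by rewrite size_map size_iota ltnn.
exists i.+1%:R => // k Pk; apply: contra Qi; rewrite /root /Q horner_prod => /eqP Pk0.
by apply/prodf_eq0; exists k; rewrite ?Pk0.
Qed.

Section RegularSubdivisions.
Variables (R : realType) (d n : nat) (a : 'I_n -> 'rV[R]_d) (h : 'I_n -> R).

Lemma lower_cell_of_minorant (C : {set 'I_n}) c b :
  (forall j, j \in C -> h j = dotv c (a j) + b) ->
  (forall j, j \notin C -> dotv c (a j) + b < h j) -> lower_cell a h C.
Proof.
move=> eq_h lt_h; exists (- c), 1, b; split; first exact: ltr01.
split=> j; rewrite dotvNl mul1r; have [Cj|Cj] := boolP (j \in C).
- by rewrite eq_h // addKr.
- by have := lt_h j Cj; lra.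
- by rewrite eq_h // addKr eqxx.
- by rewrite gt_eqF //; have := lt_h j Cj; lra.
Qed.

Lemma lower_cell_dep (C : {set 'I_n}) (l : 'I_n -> R) : lower_cell a h C ->
  (forall j, j \notin C -> l j = 0) -> \sum_j l j = 0 -> \sum_j l j *: a j = 0 ->
  \sum_j l j * h j = 0.
Proof.
move=> [c [c0 [b [c0_gt0 [_ cellE]]]]] lC l0 la.
have : \sum_j l j * (dotv c (a j) + c0 * h j) = 0.
  rewrite (eq_bigr (fun j => l j * b)) => [|j _]; first by rewrite -mulr_suml l0 mul0r.
  by have [/[!cellE]/eqP ->|/lC ->] := boolP (j \in C); rewrite ?mul0r.
under eq_bigr do rewrite mulrDr mulrCA.
rewrite big_split /= -dotv_sum la dotv0r add0r -mulr_sumr => /eqP.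
by rewrite mulf_eq0 gt_eqF //= => /eqP.
Qed.

Lemma regular_triangulation_of_affindep :
  (forall C, lower_cell a h C -> affindep_set a C) -> regular_triangulation a h.
Proof.
by move=> indep C /indep indepC; split=> // x; apply: is_vertex_conv_affindep.
Qed.

End RegularSubdivisions.

Lemma not_affindep_set_dep (R : realType) (d n : nat) (a : 'I_n -> 'rV[R]_d)
    (C : {set 'I_n}) :
  ~ affindep_set a C -> exists l : 'I_n -> R,
    [/\ forall j, j \notin C -> l j = 0, \sum_j l j = 0, \sum_j l j *: a j = 0
      & exists j, l j != 0].
Proof.
move=> dep; apply: contrapT => none; apply: dep => l lC l0 la j.
by apply: contrapT => lj; apply: none; exists l; split=> //; exists j; apply/eqP.
Qed.

Section Lifting.
Variables (R : realType) (d n : nat) (a : 'I_n -> 'rV[R]_d).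
Variables (S1 S2 : {set 'I_n}) (c : 'rV[R]_d) (b : R) (v2 : 'I_n).
Hypotheses (indepS1 : affindep_set a S1) (S2DS1 : S2 :\: S1 = [set v2]).
Hypotheses (ge_b : forall j, j \in S1 -> b <= dotv c (a j))
  (eq_b : forall j, j \in S1 -> (dotv c (a j) == b) = (j \in S2))
  (lt_b : dotv c (a v2) < b).

Let M := \sum_j `|dotv c (a j) - b|.

(* On [S1 :|: S2] these are the heights [max (dotv c (a j) - b) 0]; the
   heights of the other points exceed [M] and are independent polynomials in
   the parameter, which is later chosen generic. *)
Definition height_poly j : {poly R} :=
  if j \in S1 then (dotv c (a j) - b)%:P
  else if j \in S2 then 0 else M%:P + 'X^(j.+1).

Lemma height_polyE t j : (height_poly j).[t] =
  if j \in S1 then dotv c (a j) - b else if j \in S2 then 0 else M + t ^+ j.+1.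
Proof.
rewrite /height_poly; case: ifP => _; first exact: hornerC.
by case: ifP => _; rewrite ?horner0 // hornerD hornerC hornerXn.
Qed.

Let v2_S2DS1 : v2 \in S2 :\: S1. Proof. by rewrite S2DS1 set11. Qed.
Let S2v2 : v2 \in S2. Proof. by case/setDP: v2_S2DS1. Qed.
Let S1v2 : v2 \notin S1. Proof. by case/setDP: v2_S2DS1. Qed.
Let S2DS1_v2 j : j \in S2 -> j \notin S1 -> j = v2.
Proof. by move=> S2j S1j; apply/set1P; rewrite -S2DS1; apply/setDP. Qed.

Let above_M j t : 0 < t -> `|dotv c (a j) - b| < M + t ^+ j.+1.
Proof.
move=> t_gt0; have := exprn_gt0 j.+1 t_gt0.
have : `|dotv c (a j) - b| <= M by rewrite /M (bigD1 j) //= lerDl sumr_ge0.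
by move=> *; lra.
Qed.

Lemma lower_cell_S1 t : 0 < t -> lower_cell a (fun j => (height_poly j).[t]) S1.
Proof.
move=> t_gt0; apply: (lower_cell_of_minorant (c := c) (b := - b)) => j S1j;
  rewrite height_polyE ?S1j // (negbTE S1j).
have [/S2DS1_v2/(_ S1j) ->|_] := boolP (j \in S2); first by rewrite subr_lt0.
by have := above_M j t_gt0; have := ler_norm (dotv c (a j) - b); lra.
Qed.

Lemma lower_cell_S2 t : 0 < t -> lower_cell a (fun j => (height_poly j).[t]) S2.
Proof.
move=> t_gt0; apply: (lower_cell_of_minorant (c := 0) (b := 0)) => j S2j;
  rewrite dotv0l addr0 height_polyE.
  have [S1j|] := boolP (j \in S1); last by rewrite S2j.
  by apply/eqP; rewrite subr_eq0 eq_b.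
have [S1j|S1j] := boolP (j \in S1); last first.
  rewrite (negbTE S2j); have := above_M j t_gt0.
  by have := normr_ge0 (dotv c (a j) - b); lra.
by rewrite lt_def subr_ge0 ge_b // subr_eq0 eq_b // S2j.
Qed.

(* The monomials ['X^(j.+1)] kill the dependency outside [S1 :|: S2], the
   constant terms kill it at [v2], and the independence of [S1] on [S1]. *)
Lemma height_poly_dep_eq0 (l : 'I_n -> R) :
  \sum_j l j = 0 -> \sum_j l j *: a j = 0 -> \sum_j l j *: height_poly j = 0 ->
  forall j, l j = 0.
Proof.
move=> l0 la lh0.
have out j : j \notin S1 -> j \notin S2 -> l j = 0.
  move=> S1j S2j; have := congr1 (fun p : {poly R} => p`_j.+1) lh0.
  rewrite /= coef0 coef_sum (bigD1 j) //= big1 ?addr0 => [|i ij].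
    rewrite coefZ /height_poly (negbTE S1j) (negbTE S2j) coefD coefC coefXn eqxx /=.
    by rewrite add0r mulr1.
  rewrite coefZ /height_poly; case: ifP => _; first by rewrite coefC /= mulr0.
  case: ifP => _; first by rewrite coef0 mulr0.
  rewrite coefD coefC coefXn /= eqSS (inj_eq (@ord_inj n)) eq_sym (negbTE ij).
  by rewrite add0r mulr0.
have eval0 : \sum_j l j * (height_poly j).[0] = 0.
  by rewrite -[RHS](horner0 0) -lh0 horner_sum; apply: eq_bigr => j _; rewrite hornerZ.
have dep_del : \sum_j l j * (dotv c (a j) - b) = 0.
  by rewrite -dotv_combB la l0 dotv0r mul0r subrr.
have l_v2 : l v2 = 0.
  have : \sum_j l j * (dotv c (a j) - b) =
      \sum_j l j * (height_poly j).[0] + l v2 * (dotv c (a v2) - b).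
    rewrite (bigD1 v2) //= [X in _ = X + _](bigD1 v2) //= height_polyE (negbTE S1v2) S2v2.
    rewrite mulr0 add0r addrC; congr (_ + _).
    apply: eq_bigr => j jv2; rewrite height_polyE.
    case: ifP => // S1j; case: ifP => S2j.
      by move: jv2; rewrite (S2DS1_v2 S2j (negbT S1j)) eqxx.
    by rewrite out ?S1j ?S2j // !mul0r.
  rewrite dep_del eval0 add0r => /esym/eqP; rewrite mulf_eq0 subr_eq0 (lt_eqF lt_b) orbF.
  by move/eqP.
apply: indepS1 => // j S1j.
by have [S2j|] := boolP (j \in S2); [rewrite (S2DS1_v2 S2j S1j) | apply: out].
Qed.

Theorem regular_triangulation_lifting :
  exists h, regular_triangulation a h /\ lower_cell a h S1 /\ lower_cell a h S2.
Proof.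
have dep_of (C : {set 'I_n}) : exists l : 'I_n -> R, ~ affindep_set a C ->
    [/\ forall j, j \notin C -> l j = 0, \sum_j l j = 0, \sum_j l j *: a j = 0
      & exists j, l j != 0].
  have [indepC|/not_affindep_set_dep [l lP]] := pselect (affindep_set a C).
    by exists (fun=> 0) => /(_ indepC).
  by exists l.
have [lam lamP] := choice dep_of.
have [t t_gt0 t_nonroot] := exists_pos_nonroot (fun C => \sum_j lam C j *: height_poly j).
exists (fun j => (height_poly j).[t]).
split; last by split; [apply: lower_cell_S1 | apply: lower_cell_S2].
apply: regular_triangulation_of_affindep => C cellC.
apply: contrapT => /lamP [lC l0 la [j lj]].
have P_neq0 : \sum_j lam C j *: height_poly j != 0.
  by apply: contraNneq lj => /(height_poly_dep_eq0 l0 la) ->.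
move/negP: (t_nonroot C P_neq0); apply; rewrite /root horner_sum.
under eq_bigr do rewrite hornerZ.
by rewrite (lower_cell_dep cellC lC l0 la).
Qed.

End Lifting.

Lemma ptsR_inj (R : realType) (d n : nat) (aZ : 'I_n -> 'rV[int]_d) :
  injective aZ -> injective (ptsR R aZ).
Proof.
move=> inj_aZ i j /matrixP eq_ij; apply/inj_aZ/matrixP => x y.
by have := eq_ij x y; rewrite !mxE => /intr_inj.
Qed.

Theorem proposition2p5 (R : realType) (d n : nat)
    (aZ : 'I_n -> 'rV[int]_d) (S1 S2 : {set 'I_n}) :
  injective aZ ->
  (d + 2 <= n)%N ->
  has_dim (conv (ptsR R aZ) setT) d ->
  is_simplex (ptsR R aZ) S1 ->
  is_simplex (ptsR R aZ) S2 ->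
  share_facet (ptsR R aZ) S1 S2 ->
  (exists h : 'I_n -> R, in_cone (ptsR R aZ) S1 S2 h) /\
  (exists h : 'I_n -> R, regular_triangulation (ptsR R aZ) h /\
      lower_cell (ptsR R aZ) h S1 /\ lower_cell (ptsR R aZ) h S2).
Proof.
move=> inj_aZ _ _ simplex1 simplex2 shared.
have [c [b [v2 [S2DS1 ge_b eq_b lt_b]]]] :=
  share_facet_separation (ptsR_inj (R := R) inj_aZ) simplex1 simplex2 shared.
have [h [tri [cell1 cell2]]] :=
  regular_triangulation_lifting (proj2 simplex1) S2DS1 ge_b eq_b lt_b.
by split; exists h.
Qed.
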